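(* Let $n\geq 2$, let $\Gamma=\langle\mathbb{Z}^n,(0,-I_n)\rangle\subseteq\mathrm{Aff}(\mathbb{R}^n)$ with holonomy group $F=\{I_n,-I_n\}$, and let $\varphi=\xi_{(d,D)}\in\mathrm{Aut}(\Gamma)$ (so that $d\in(\tfrac12\mathbb{Z})^n$ and $D\in\mathrm{GL}_n(\mathbb{Z})$). Then $$R(\varphi)=\left(\frac12\sum_{A\in F}|\det(I_n-AD)|_\infty\right)+O(I_n-D,2d).$$
   Context: $\mathrm{Aff}(\mathbb{R}^n)=\mathbb{R}^n\rtimes\mathrm{GL}_n(\mathbb{R})$ with multiplication $(d_1,D_1)(d_2,D_2)=(d_1+D_1d_2,D_1D_2)$; $\mathbb{Z}^n$ denotes $\{(z,I_n)\mid z\in\mathbb{Z}^n\}$. For $(d,D)\in\mathrm{Aff}(\mathbb{R}^n)$, $\xi_{(d,D)}$ denotes $\gamma\mapsto(d,D)\gamma(d,D)^{-1}$; every automorphism of $\Gamma$ has this form, with $d\in(\frac12\mathbb{Z})^n$. $R(\varphi)$ is the number of classes of the relation $g\sim g'\iff\exists h\in\Gamma: g=hg'\varphi(h)^{-1}$. For an integer $x$, $|x|_\infty=|x|$ if $x\neq0$ and $\infty$ if $x=0$. For $B\in\mathbb{Z}^{n\times n}$, $b\in\mathbb{Z}^n$, $O(B,b)$ is the number of solutions $\bar x\in\mathbb{Z}_2^n$ of $\bar B\bar x=\bar b$ over $\mathbb{Z}_2$, bars denoting reduction mod $2$. *)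

From HB Require Import structures.
From mathcomp Require Import all_boot all_order all_algebra.
Set Implicit Arguments. Unset Strict Implicit. Unset Printing Implicit Defensive.
Import Order.TTheory GRing.Theory Num.Theory.
Local Open Scope ring_scope.

Definition aff (R : realFieldType) (n : nat) : Type := ('cV[R]_n * 'M[R]_n)%type.

Definition aff_mul (R : realFieldType) (n : nat) (g h : aff R n) : aff R n :=
  (g.1 + g.2 *m h.1, g.2 *m h.2).

Definition aff_inv (R : realFieldType) (n : nat) (g : aff R n) : aff R n :=
  (- (invmx g.2 *m g.1), invmx g.2).

Definition xi (R : realFieldType) (n : nat) (a : aff R n) (g : aff R n) : aff R n :=
  aff_mul (aff_mul a g) (aff_inv a).

(* Gamma = < Z^n, (0,-I_n) > = { (z, I_n), (z, -I_n) | z in Z^n } *)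
Definition in_Gamma (R : realFieldType) (n : nat) (g : aff R n) : Prop :=
  exists (z : 'cV[int]_n) (s : bool),
    g = (map_mx (fun k : int => k%:~R) z, (if s then - 1%:M else 1%:M)).

Definition reid_rel (R : realFieldType) (n : nat) (phi : aff R n -> aff R n)
  (g g' : aff R n) : Prop :=
  exists2 h, in_Gamma h & g = aff_mul (aff_mul h g') (aff_inv (phi h)).

(* R(phi) as an element of N u {oo}: None = infinity.
   reid_number phi (Some k): there are exactly k twisted conjugacy classes,
   i.e. k pairwise inequivalent elements of Gamma meeting every class;
   reid_number phi None: there are infinitely many classes, i.e. for every k
   there are k pairwise inequivalent elements of Gamma. *)
Definition reid_number (R : realFieldType) (n : nat) (phi : aff R n -> aff R n)
  (r : option nat) : Prop :=
  match r with
  | Some k =>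
      exists reps : 'I_k -> aff R n,
        [/\ forall i, in_Gamma (reps i),
            forall i j, reid_rel phi (reps i) (reps j) -> i = j
          & forall g, in_Gamma g -> exists i, reid_rel phi g (reps i)]
  | None =>
      forall k, exists reps : 'I_k -> aff R n,
        (forall i, in_Gamma (reps i)) /\
        (forall i j, reid_rel phi (reps i) (reps j) -> i = j)
  end.

Definition abs_inf (x : int) : option nat :=
  if x == 0 then None else Some `|x|%N.

Definition oadd (a b : option nat) : option nat :=
  match a, b with Some x, Some y => Some (x + y)%N | _, _ => None end.

Definition holF (n : nat) : seq 'M[int]_n := [:: 1%:M; - 1%:M].

Definition hol_sum (n : nat) (D : 'M[int]_n) : option nat :=
  foldr oadd (Some 0%N) [seq abs_inf (\det (1%:M - A *m D)) | A <- holF n].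

Definition O_count (n : nat) (B : 'M[int]_n) (b : 'cV[int]_n) : nat :=
  #|[set x : 'cV['F_2]_n |
       map_mx (fun k : int => (k%:~R : 'F_2)) B *m x
       == map_mx (fun k : int => (k%:~R : 'F_2)) b]|.

Definition rhs_value (s : option nat) (o : nat) : option rat :=
  match s with Some m => Some ((m%:R : rat) / 2 + (o%:R : rat)) | None => None end.

Definition reid_value (R : realFieldType) (n : nat) (phi : aff R n -> aff R n)
  (v : option rat) : Prop :=
  match v with
  | Some q => exists k : nat, (k%:R : rat) = q /\ reid_number phi (Some k)
  | None => reid_number phi None
  end.

From HB Require Import structures.
From mathcomp Require Import all_boot all_order all_algebra zify ring lra.
Set Implicit Arguments. Unset Strict Implicit. Unset Printing Implicit Defensive.
Import Order.TTheory GRing.Theory Num.Theory.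
Local Open Scope ring_scope.

(* Every element of Gamma is (x, A) with x in Z^n and A = +-I, and phi preserves A.
   For a fixed holonomy A, twisted conjugacy is the relation
     x ~ x' + (I - AD) z   or   x ~ -Ab - x' + (I - AD) z      (b = 2d),
   so its classes are the orbits of the involution y |-> -Ab - y on Z^n / (I - AD) Z^n.
   If det (I - AD) = 0 this quotient is infinite, and so is R(phi).  Otherwise it has
   |det (I - AD)| elements and, by Burnside, (|det (I - AD)| + #fixed points) / 2 orbits.
   Through a Smith normal form of I - AD, the fixed points (the y with 2y = -Ab modulo
   I - AD) correspond to the solutions of (I - AD) x = b over Z_2; modulo 2, I + D = I - D
   and -b = b, so both holonomies contribute O(I - D, 2d) fixed points. *)

Section Transversal.
Variables (T : Type) (r : T -> T -> Prop).

Definition distinct_mod k (q : 'I_k -> T) := forall i j, r (q i) (q j) -> i = j.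

Definition transversal k (q : 'I_k -> T) :=
  distinct_mod q /\ forall x, exists i, r x (q i).

End Transversal.

Lemma involution_transversal (T : finType) (f : T -> T) : involutive f ->
  exists k (q : 'I_k -> T), transversal (fun x y => x = y \/ x = f y) q /\
    (k.*2 = #|T| + #|[set t | f t == t]|)%N.
Proof.
move=> fK.
pose Q := [set t | (enum_rank t <= enum_rank (f t))%N].
pose Q_lt := [set t | (enum_rank t < enum_rank (f t))%N].
have card_Q : #|Q| = (#|Q_lt| + #|[set t | f t == t]|)%N.
  rewrite -(cardsID [set t | f t == t] Q) addnC; congr (_ + _)%N; apply: eq_card => t;
  by rewrite !inE -(inj_eq enum_rank_inj) -val_eqE /=; lia.
have card_notQ : #|~: Q| = #|Q_lt|.
  rewrite -(card_imset Q_lt (inv_inj fK)); apply: eq_card => t; rewrite inE.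
  apply/idP/imsetP => [tNQ | [u]]; last by rewrite !inE => lt_u ->; rewrite fK -ltnNge.
  by exists (f t); rewrite ?fK //; move: tNQ; rewrite !inE fK ltnNge.
exists #|Q|, (fun i => enum_val i); split; last by rewrite -(cardsC Q) card_notQ; lia.
split=> [i j [/enum_val_inj // | eq_ij] | t].
  have := enum_valP i; have := enum_valP j; rewrite !inE eq_ij fK => le1 le2.
  apply/enum_val_inj; rewrite eq_ij; apply/esym/enum_rank_inj/val_inj/eqP.
  by rewrite eqn_leq le1 le2.
have [tQ | tNQ] := boolP (t \in Q).
  by exists (enum_rank_in tQ t); left; rewrite enum_rankK_in.
have ftQ : f t \in Q by move: tNQ; rewrite !inE fK -ltnNge => /ltnW.
by exists (enum_rank_in ftQ (f t)); right; rewrite enum_rankK_in // fK.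
Qed.

Lemma eq_intr_Fp p (u v : int) : prime p ->
  ((u%:~R : 'F_p) == v%:~R) = (p %| u - v)%Z.
Proof. by move=> p_pr; rewrite -subr_eq0 -rmorphB -(dvdz_pcharf (pchar_Fp p_pr)). Qed.

Lemma natr_F2 (x : 'F_2) : ((x : nat)%:Z)%:~R = x.
Proof. exact: natr_Zp. Qed.

Local Notation mod2 := (map_mx (fun k : int => (k%:~R : 'F_2))).

Lemma mod2N m n (M : 'M[int]_(m, n)) : mod2 (- M) = mod2 M.
Proof. by apply/matrixP => i j; rewrite !mxE rmorphN oppr_pchar2 // pchar_Fp. Qed.

Lemma natr_F2_spec (k : int) : exists m : int, ((k%:~R : 'F_2) : nat)%:Z = k + 2 * m.
Proof.
have /eqP := natr_F2 (k%:~R); rewrite eq_intr_Fp // => /dvdzP [m def_m].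
by exists m; rewrite mulrC -def_m addrC subrK.
Qed.

Definition refl_congr n (A : 'M[int]_n) (c x y : 'cV[int]_n) : Prop :=
  exists z, x = y + A *m z \/ x = c - y + A *m z.

Lemma diag_cosetP n (a : 'I_n -> int) (x y : 'cV[int]_n) :
  (exists z, x = y + diag_mx (\row_i a i) *m z) <-> forall i, (a i %| (x i 0 - y i 0)%R)%Z.
Proof.
split=> [[z ->] i | dvd_a].
  by rewrite mul_diag_mx !mxE addrAC subrr add0r dvdz_mulr.
exists (\col_i ((x i 0 - y i 0)%R %/ a i)%Z); apply/matrixP => i j.
by rewrite (ord1 j) mul_diag_mx !mxE mulrC divzK // addrC subrK.
Qed.

Lemma absz_modz_lt (x a : int) : a != 0 -> (`|(x %% a)%Z| < `|a|)%N.
Proof. by move=> a0; rewrite -ltz_nat gez0_abs ?modz_ge0 // abszE ltz_mod. Qed.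

Section DiagonalQuotient.
Variables (n : nat) (a : 'I_n -> int).
Hypothesis a_neq0 : forall i, a i != 0.

Definition residues := {dffun forall i : 'I_n, 'I_`|a i|}.

Definition res_of (x : 'cV[int]_n) : residues :=
  @finfun _ (fun i => 'I_`|a i|) (fun i => Ordinal (absz_modz_lt (x i 0) (a_neq0 i))).

Definition res_val (t : residues) : 'cV[int]_n := \col_i (t i : nat)%:Z.

Lemma res_valK : cancel res_val res_of.
Proof.
move=> t; apply/ffunP => i; apply: val_inj; rewrite ffunE /= mxE -modz_abs.
by rewrite modz_small // ltz_nat ltn_ord.
Qed.

Lemma res_of_eqP x y : res_of x = res_of y <-> forall i, (a i %| (x i 0 - y i 0)%R)%Z.
Proof.
have res_ofE z i : (res_of z i : nat)%:Z = ((z i 0)%R %% a i)%Z.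
  by rewrite ffunE /= gez0_abs ?modz_ge0.
split=> [xy i | dvd_a]; last first.
  by apply/ffunP => i; apply/val_inj/eqP; rewrite -eqz_nat !res_ofE eqz_mod_dvd.
by rewrite -eqz_mod_dvd -!res_ofE xy.
Qed.

Lemma res_of_spec x i : exists m : int, res_val (res_of x) i 0 = x i 0 + m * a i.
Proof.
have /dvdzP := (res_of_eqP (res_val (res_of x)) x).1 (res_valK _) i.
by case => m def_m; exists m; rewrite -def_m addrC subrK.
Qed.

Lemma refl_congr_diag c x y :
  refl_congr (diag_mx (\row_i a i)) c x y <-> res_of x = res_of y \/ res_of x = res_of (c - y).
Proof.
rewrite !res_of_eqP -!diag_cosetP; split=> [[z [xy | xcy]] | [[z xy] | [z xcy]]].
- by left; exists z.
- by right; exists z.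
- by exists z; left.
- by exists z; right.
Qed.

Lemma res_of_subl c x y : res_of x = res_of y -> res_of (c - x) = res_of (c - y).
Proof.
move=> /res_of_eqP dvd_a; apply/res_of_eqP => i; rewrite !mxE.
have -> : c i 0 - x i 0 - (c i 0 - y i 0) = - (x i 0 - y i 0) by ring.
by rewrite rpredN.
Qed.

Variable c : 'cV[int]_n.

Definition res_refl (t : residues) : residues := res_of (c - res_val t).

Lemma res_reflK : involutive res_refl.
Proof.
by move=> t; rewrite /res_refl (res_of_subl c (res_valK (res_of _))) subKr res_valK.
Qed.

Lemma res_refl_fixedP t : res_refl t = t <-> forall i, (a i %| (c i 0 - 2 * res_val t i 0)%R)%Z.
Proof.
have sub2 (u v : int) : u - v - v = u - 2 * v by ring.
rewrite /res_refl -{2}(res_valK t) res_of_eqP.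
by split=> dvd_a i; move: (dvd_a i); rewrite !mxE sub2.
Qed.

Lemma card_residues : #|{: residues}| = (\prod_i `|a i|)%N.
Proof.
rewrite card_dep_ffun foldrE big_map big_enum /=.
by apply: eq_bigr => i _; rewrite card_ord.
Qed.

Let diag_a := diag_mx (\row_i a i).

Lemma mod2_diag_solP (x : 'cV['F_2]_n) :
  reflect (forall i, (a i)%:~R * x i 0 = (c i 0)%:~R) (mod2 diag_a *m x == mod2 c).
Proof.
apply: (iffP eqP) => [sol_x i | sol_x]; last first.
  by apply/matrixP => i j; rewrite (ord1 j) map_diag_mx mul_diag_mx !mxE sol_x.
by have := congr1 (fun v : 'cV_n => v i 0) sol_x; rewrite map_diag_mx mul_diag_mx !mxE.
Qed.

(* A fixed residue t satisfies 2 t = c modulo a; t |-> (2 t - c) / a mod 2 is a bijection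
   onto the solutions of a x = c over F_2, with inverse x |-> (a x + c) / 2. *)
Definition fix_quot (t : residues) : 'cV[int]_n :=
  \col_i ((2 * res_val t i 0 - c i 0)%R %/ a i)%Z.

Definition sol_half (x : 'cV['F_2]_n) : 'cV[int]_n :=
  \col_i ((a i * (x i 0 : nat)%:Z + c i 0)%R %/ 2)%Z.

Lemma fix_quotE t i : res_refl t = t -> a i * fix_quot t i 0 = 2 * res_val t i 0 - c i 0.
Proof.
move=> /res_refl_fixedP dvd_a; rewrite mxE mulrC divzK //.
by rewrite -opprB rpredN.
Qed.

Lemma sol_halfE x i : mod2 diag_a *m x == mod2 c ->
  2 * sol_half x i 0 = a i * (x i 0 : nat)%:Z + c i 0.
Proof.
move=> /mod2_diag_solP/(_ i); set xh := (x i 0 : nat)%:Z.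
rewrite -[x i 0]natr_F2 -/xh -rmorphM => /eqP; rewrite eq_intr_Fp // => dvd2.
rewrite mxE -/xh mulrC divzK //.
have -> : a i * xh + c i 0 = (a i * xh - c i 0) + 2 * c i 0 by ring.
by rewrite rpredD ?dvdz_mulr.
Qed.

Definition fix_to_sol (t : residues) : 'cV['F_2]_n := mod2 (fix_quot t).

Definition sol_to_fix (x : 'cV['F_2]_n) : residues := res_of (sol_half x).

Lemma fix_to_sol_solves t : res_refl t = t -> mod2 diag_a *m fix_to_sol t == mod2 c.
Proof.
move=> fix_t; apply/mod2_diag_solP => i; rewrite mxE -rmorphM fix_quotE //.
by apply/eqP; rewrite eq_intr_Fp // (_ : _ - _ = 2 * (res_val t i 0 - c i 0)) ?dvdz_mulr //; ring.
Qed.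

Lemma fix_to_solK t : res_refl t = t -> sol_to_fix (fix_to_sol t) = t.
Proof.
move=> fix_t; rewrite -[RHS]res_valK; apply/res_of_eqP => i; apply/dvdzP.
have := sol_halfE i (fix_to_sol_solves fix_t); have := fix_quotE i fix_t.
rewrite [fix_to_sol t i 0]mxE; have [m ->] := natr_F2_spec (fix_quot t i 0).
by exists m; nia.
Qed.

Lemma sol_to_fix_fixed x : mod2 diag_a *m x == mod2 c -> res_refl (sol_to_fix x) = sol_to_fix x.
Proof.
move=> sol_x; apply/res_refl_fixedP => i; apply/dvdzP.
have [m ->] := res_of_spec (sol_half x) i; have := sol_halfE i sol_x.
by exists (- (x i 0 : nat)%:Z - 2 * m); nia.
Qed.

Lemma sol_to_fixK x : mod2 diag_a *m x == mod2 c -> fix_to_sol (sol_to_fix x) = x.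
Proof.
move=> sol_x; apply/matrixP => i j; rewrite (ord1 j) mxE -[RHS]natr_F2; apply/eqP.
rewrite eq_intr_Fp //; apply/dvdzP.
have := fix_quotE i (sol_to_fix_fixed sol_x); rewrite /sol_to_fix.
have [m ->] := res_of_spec (sol_half x) i; have := sol_halfE i sol_x.
move=> def2 def_a; exists m; apply: (mulfI (a_neq0 i)).
rewrite mulrBr def_a mulrDr def2; ring.
Qed.

Lemma card_res_refl_fixed : #|[set t | res_refl t == t]| = O_count diag_a c.
Proof.
have fix_to_sol_inj : {in [set t | res_refl t == t] &, injective fix_to_sol}.
  by apply: (can_in_inj (g := sol_to_fix)) => t; rewrite inE => /eqP /fix_to_solK.
rewrite /O_count -(card_in_imset fix_to_sol_inj); apply: eq_card => x; rewrite inE.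
apply/imsetP/idP => [[t] | sol_x]; first by rewrite inE => /eqP /fix_to_sol_solves sol_t ->.
by exists (sol_to_fix x); rewrite ?inE ?sol_to_fixK ?sol_to_fix_fixed.
Qed.

Lemma diag_transversal : exists k (q : 'I_k -> 'cV[int]_n),
  transversal (refl_congr diag_a c) q /\ (k.*2 = \prod_i `|a i| + O_count diag_a c)%N.
Proof.
have [k [q [[q_distinct q_cover] card_k]]] := involution_transversal res_reflK.
exists k, (fun i => res_val (q i)).
split; last by rewrite card_k card_residues card_res_refl_fixed.
split=> [i j | x]; first by rewrite refl_congr_diag !res_valK; apply: q_distinct.
by have [i qi] := q_cover (res_of x); exists i; apply/refl_congr_diag; rewrite res_valK.
Qed.

End DiagonalQuotient.

Lemma refl_congr_unimodular n (L B Rm : 'M[int]_n) (c x y : 'cV[int]_n) :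
  L \in unitmx -> Rm \in unitmx ->
  refl_congr (L *m B *m Rm) c x y <->
  refl_congr B (invmx L *m c) (invmx L *m x) (invmx L *m y).
Proof.
move=> uL uR; split=> [[z [->|->]] | [z [xy|xcy]]].
- by exists (Rm *m z); left; rewrite mulmxDr !mulmxA mulVmx // mul1mx.
- by exists (Rm *m z); right; rewrite mulmxDr mulmxBr !mulmxA mulVmx // mul1mx.
- exists (invmx Rm *m z); left; rewrite -[x](mulKVmx uL) xy mulmxDr mulKVmx //.
  by rewrite -!mulmxA mulKVmx.
- exists (invmx Rm *m z); right; rewrite -[x](mulKVmx uL) xcy mulmxDr mulmxBr !mulKVmx //.
  by rewrite -!mulmxA mulKVmx.
Qed.

Lemma mod2_unitmx n (L : 'M[int]_n) : L \in unitmx ->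
  mod2 (invmx L) *m mod2 L = 1%:M /\ mod2 L *m mod2 (invmx L) = 1%:M.
Proof. by move=> uL; rewrite -!map_mxM mulVmx ?mulmxV // map_mx1. Qed.

Lemma O_count_unimodular n (L B Rm : 'M[int]_n) (c : 'cV[int]_n) :
  L \in unitmx -> Rm \in unitmx ->
  O_count (L *m B *m Rm) c = O_count B (invmx L *m c).
Proof.
move=> /mod2_unitmx [VL LV] /mod2_unitmx [VR RV]; rewrite /O_count.
have mulR_inj : injective (mulmx (mod2 Rm) : 'cV_n -> 'cV_n).
  by apply: (can_inj (g := mulmx (mod2 (invmx Rm)))) => y; rewrite mulmxA VR mul1mx.
rewrite -(card_imset _ mulR_inj); apply: eq_card => y; rewrite inE !map_mxM.
apply/imsetP/idP => [[x] | sol_y].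
  by rewrite inE => /eqP <- ->; rewrite !mulmxA VL mul1mx.
exists (mod2 (invmx Rm) *m y); last by rewrite mulmxA RV mul1mx.
by rewrite inE -!mulmxA (mulmxA (mod2 Rm)) RV mul1mx (eqP sol_y) mulmxA LV mul1mx.
Qed.

Lemma absz_det_unitmx n (L : 'M[int]_n) : L \in unitmx -> `|\det L|%N = 1%N.
Proof. by rewrite unitmxE => /orP [] /eqP ->. Qed.

Lemma smith_diag n (A : 'M[int]_n) : exists L Rm (a : 'I_n -> int),
  [/\ L \in unitmx, Rm \in unitmx, A = L *m diag_mx (\row_i a i) *m Rm
    & `|\det A|%N = (\prod_i `|a i|)%N].
Proof.
have [L uL [Rm uR [ds _ defA]]] := int_Smith_normal_form A.
have {defA}defA : A = L *m diag_mx (\row_i ds`_i) *m Rm.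
  by rewrite defA; congr (_ *m _ *m _); apply/matrixP => i j; rewrite !mxE.
exists L, Rm, (fun i => ds`_i); split=> //.
rewrite defA !det_mulmx det_diag !abszM !absz_det_unitmx // mul1n muln1.
by rewrite (big_morph absz abszM absz1); apply: eq_bigr => i _; rewrite mxE.
Qed.

Lemma refl_congr_transversal n (A : 'M[int]_n) (c : 'cV[int]_n) : \det A != 0 ->
  exists k (q : 'I_k -> 'cV[int]_n),
    transversal (refl_congr A c) q /\ (k.*2 = `|\det A| + O_count A c)%N.
Proof.
move=> detA_neq0; have [L [Rm [a [uL uR defA absdetA]]]] := smith_diag A.
have a_neq0 i : a i != 0.
  by apply: contra detA_neq0 => /eqP ai0; rewrite -absz_eq0 absdetA (bigD1 i) //= ai0.
have [k [q [[q_distinct q_cover] card_k]]] := diag_transversal a_neq0 (invmx L *m c).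
exists k, (fun i => L *m q i); split; last by rewrite card_k absdetA defA O_count_unimodular.
split=> [i j | x]; first by rewrite defA refl_congr_unimodular // !mulKmx //; apply: q_distinct.
have [i qi] := q_cover (invmx L *m x); exists i.
by rewrite defA refl_congr_unimodular // mulKmx.
Qed.

(* The coordinate i0 is preserved up to y |-> c - y, which cannot identify two values
   above |c|. *)
Lemma refl_congr_diag_unbounded n (a : 'I_n -> int) i0 (c : 'cV[int]_n) : a i0 = 0 ->
  forall k, exists q : 'I_k -> 'cV[int]_n, distinct_mod (refl_congr (diag_mx (\row_i a i)) c) q.
Proof.
move=> ai0 k; pose C := (absz (c i0 0)).+1.
exists (fun j => \col_l (if l == i0 then (C + j)%:Z else 0)) => i j [z].
rewrite mul_diag_mx => -[] /(congr1 (fun v : 'cV_n => v i0 0)).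
  by rewrite !mxE eqxx ai0 mul0r addr0 => eq_ij; apply: ord_inj; lia.
rewrite !mxE eqxx ai0 mul0r addr0; have := ler_norm (c i0 0); rewrite -abszE /C.
by move: (c i0 0 : int) => u le_u eq_u; exfalso; lia.
Qed.

Lemma refl_congr_unbounded n (A : 'M[int]_n) (c : 'cV[int]_n) : \det A = 0 ->
  forall k, exists q : 'I_k -> 'cV[int]_n, distinct_mod (refl_congr A c) q.
Proof.
move=> detA0 k; have [L [Rm [a [uL uR defA absdetA]]]] := smith_diag A.
have [i0 ai0] : exists i0, a i0 = 0.
  have : (\prod_i `|a i| == 0)%N by rewrite -absdetA detA0.
  by rewrite prod_nat_seq_eq0 => /hasP [i _ /andP [_]]; rewrite absz_eq0 => /eqP; exists i.
have [q q_distinct] := refl_congr_diag_unbounded (invmx L *m c) ai0 k.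
exists (fun i => L *m q i) => i j.
by rewrite defA refl_congr_unimodular // !mulKmx //; apply: q_distinct.
Qed.

Definition sgn_mx (R : pzRingType) n (s : bool) : 'M[R]_n := if s then - 1%:M else 1%:M.
Arguments sgn_mx {R n}.

Definition aff_int (R : realFieldType) n (x : 'cV[int]_n) (s : bool) : aff R n :=
  (map_mx (fun k : int => k%:~R) x, sgn_mx s).
Arguments aff_int {R n}.

Lemma invmx_sgn (R : realFieldType) n s : invmx (sgn_mx s : 'M[R]_n) = sgn_mx s.
Proof.
case: s; rewrite /sgn_mx ?invmx1 //.
have -> : - 1%:M = (-1)%:M :> 'M[R]_n by apply/matrixP => i j; rewrite !mxE mulNrn.
by rewrite invmx_scalar invrN1.
Qed.

Lemma aff_int_inj (R : realFieldType) n (x y : 'cV[int]_n) s t : (0 < n)%N ->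
  aff_int x s = aff_int y t :> aff R n -> x = y /\ s = t.
Proof.
move=> n_gt0 [/matrixP eq_xy eq_st]; split.
  by apply/matrixP => i j; have := eq_xy i j; rewrite !mxE => /intr_inj.
move/matrixP/(_ (Ordinal n_gt0) (Ordinal n_gt0)): eq_st.
case: s; case: t; rewrite /sgn_mx !mxE eqxx //= => /eqP.
  by rewrite eq_sym -addr_eq0 -mulr2n pnatr_eq0.
by rewrite -addr_eq0 -mulr2n pnatr_eq0.
Qed.

Lemma mul_aff_int (R : realFieldType) n (z x w : 'cV[int]_n) s t :
  aff_mul (aff_mul (aff_int z s) (aff_int x t)) (aff_inv (aff_int w s)) =
  aff_int (z + sgn_mx s *m x - sgn_mx t *m w) t :> aff R n.
Proof.
rewrite /aff_mul /aff_inv /aff_int /= invmx_sgn !map_mxD !map_mxN !map_mxM.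
case: s; case: t; rewrite /sgn_mx ?map_mxN map_mx1 ?mulmxN ?mulNmx ?mulmx1 ?mul1mx ?opprK //.
Qed.

Lemma in_GammaP (R : realFieldType) n (g : aff R n) :
  in_Gamma g <-> exists x s, g = aff_int x s.
Proof. by []. Qed.

Section TwistedConjugacy.
Variables (R : realFieldType) (n : nat) (d : 'cV[R]_n) (D : 'M[R]_n).
Variables (b : 'cV[int]_n) (Dz : 'M[int]_n).
Hypotheses (hb : 2 *: d = map_mx (fun k : int => k%:~R) b)
  (hD : D = map_mx (fun k : int => k%:~R) Dz) (hDz : Dz \in unitmx) (n_gt0 : (0 < n)%N).

Definition twist_mx t := 1%:M - sgn_mx t *m Dz.

Definition twist_vec t := - (sgn_mx t *m b).

Lemma xi_aff_int z s :
  xi (d, D) (aff_int z s) = aff_int (Dz *m z + (if s then b else 0)) s.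
Proof.
have uD : D \in unitmx by rewrite hD unitmxE det_map_mx rmorph_unit // -unitmxE.
rewrite /xi /aff_mul /aff_inv /aff_int /= map_mxD map_mxM -hD; congr (_, _).
  case: s; rewrite /sgn_mx ?mulmxN ?mulNmx mulmx1 ?opprK mulmxA mulmxV // mul1mx.
    by rewrite -hb; apply/matrixP => i j; rewrite !mxE; ring.
  by rewrite map_mx0 addr0 addrAC subrr add0r.
by case: s; rewrite /sgn_mx ?mulmxN ?mulNmx mulmx1 mulmxV.
Qed.

Lemma twisted_conj_aff_int z u x t :
  aff_mul (aff_mul (aff_int z u) (aff_int x t)) (aff_inv (xi (d, D) (aff_int z u))) =
  aff_int ((if u then twist_vec t - x else x) + twist_mx t *m z) t :> aff R n.
Proof.
rewrite xi_aff_int mul_aff_int /twist_vec /twist_mx; congr aff_int.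
by case: u; case: t; rewrite /sgn_mx ?mulNmx !mul1mx ?mulmxBl ?mul1mx ?mulNmx;
  apply/matrixP => i j; rewrite !mxE; ring.
Qed.

Lemma reid_rel_aff_int x x' s t :
  reid_rel (xi (d, D)) (aff_int x s) (aff_int x' t) <->
  s = t /\ refl_congr (twist_mx t) (twist_vec t) x x'.
Proof.
split=> [[_ /in_GammaP [z [u ->]]] | [<- [z xx']]].
  rewrite twisted_conj_aff_int => /(aff_int_inj n_gt0) [-> ->]; split=> //.
  by exists z; case: u; [right | left].
have [u def_x] : exists u, x = (if u then twist_vec s - x' else x') + twist_mx s *m z.
  by case: xx' => ->; [exists false | exists true].
by exists (aff_int z u); [exists z, u | rewrite twisted_conj_aff_int -def_x].
Qed.

Lemma reid_number_unbounded t : \det (twist_mx t) = 0 -> reid_number (xi (d, D)) None.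
Proof.
move=> det0 k; have [q q_distinct] := refl_congr_unbounded (twist_vec t) det0 k.
exists (fun i => aff_int (q i) t); split; first by move=> i; exists (q i), t.
by move=> i j /reid_rel_aff_int [_ /q_distinct].
Qed.

Lemma reid_number_transversals k0 k1 (q0 : 'I_k0 -> 'cV[int]_n) (q1 : 'I_k1 -> 'cV[int]_n) :
  transversal (refl_congr (twist_mx false) (twist_vec false)) q0 ->
  transversal (refl_congr (twist_mx true) (twist_vec true)) q1 ->
  reid_number (xi (d, D)) (Some (k0 + k1)%N).
Proof.
move=> [q0_distinct q0_cover] [q1_distinct q1_cover].
pose q (i : 'I_(k0 + k1)) : aff R n := match split i with
            | inl j => aff_int (q0 j) false | inr j => aff_int (q1 j) true end.
exists q; split=> [i | i j | _ /in_GammaP [x [[] ->]]].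
- by rewrite /q; case: (split i) => j; apply/in_GammaP; do 2 eexists.
- rewrite /q -[i]splitK -[j]splitK; case: (split i) => i'; case: (split j) => j';
  rewrite !unsplitK => /reid_rel_aff_int [//= _ rel];
  by [rewrite (q0_distinct _ _ rel) | rewrite (q1_distinct _ _ rel)].
- have [i xi] := q1_cover x; exists (unsplit (inr i)).
  by rewrite /q unsplitK; apply/reid_rel_aff_int.
- have [i xi] := q0_cover x; exists (unsplit (inl i)).
  by rewrite /q unsplitK; apply/reid_rel_aff_int.
Qed.

Lemma hol_sumE : hol_sum Dz =
  oadd (abs_inf (\det (twist_mx false))) (oadd (abs_inf (\det (twist_mx true))) (Some 0%N)).
Proof. by []. Qed.

Lemma O_count_twist t : O_count (twist_mx t) (twist_vec t) = O_count (1%:M - Dz) b.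
Proof.
rewrite /O_count /twist_mx /twist_vec.
by case: t; rewrite /sgn_mx ?mulNmx !mul1mx ?opprK ?mod2N // !map_mxD mod2N.
Qed.

End TwistedConjugacy.

Theorem proposition5p11 (R : realFieldType) (n : nat) (hn : (2 <= n)%N)
  (d : 'cV[R]_n) (D : 'M[R]_n)
  (b : 'cV[int]_n) (Dz : 'M[int]_n)
  (hb : (2 : R) *: d = map_mx (fun k : int => k%:~R) b)   (* d in (1/2 Z)^n, 2d = b *)
  (hD : D = map_mx (fun k : int => k%:~R) Dz)               (* D integral ... *)
  (hDz : Dz \in unitmx) :                                   (* ... and in GL_n(Z) *)
  reid_value (xi (d, D))
    (rhs_value (hol_sum Dz) (O_count (1%:M - Dz) b)).
Proof.
have n_gt0 : (0 < n)%N by apply: leq_trans hn.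
rewrite hol_sumE /abs_inf.
have [det0 | det0_neq0] := eqVneq (\det (twist_mx Dz false)) 0.
  exact: (reid_number_unbounded hb hD hDz n_gt0 det0).
have [det1 | det1_neq0] := eqVneq (\det (twist_mx Dz true)) 0.
  exact: (reid_number_unbounded hb hD hDz n_gt0 det1).
have [k0 [q0 [q0_tr card_k0]]] := refl_congr_transversal (twist_vec b false) det0_neq0.
have [k1 [q1 [q1_tr card_k1]]] := refl_congr_transversal (twist_vec b true) det1_neq0.
exists (k0 + k1)%N; split; last exact: reid_number_transversals q0_tr q1_tr.
rewrite !O_count_twist in card_k0 card_k1.
have /(congr1 (fun m : nat => m%:R : rat)) : ((k0 + k1).*2 =
   `|\det (twist_mx Dz false)| + (`|\det (twist_mx Dz true)| + 0) + (O_count (1%:M - Dz) b).*2)%N.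
  by lia.
by rewrite -!muln2 !natrD !natrM; lra.
Qed.
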